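(* Let $\mathcal I$ be the set of all infinitely divisible real random variables $X$ with $E[X^2]<\infty$. For every $\varepsilon\in(0,\frac{\sqrt2}{2})$, $$\inf_{X\in\mathcal I}P\left\{|X-E[X]|\le \varepsilon\sqrt{\mathrm{Var}(X)}\right\}=0.$$
   Context: A real random variable is infinitely divisible if for every $n\ge1$ its distribution equals that of a sum of $n$ i.i.d. random variables. *)

From HB Require Import structures.
From mathcomp Require Import all_boot all_order all_algebra.
From mathcomp Require Import all_classical all_reals all_analysis.
Set Implicit Arguments. Unset Strict Implicit. Unset Printing Implicit Defensive.
Import Order.TTheory GRing.Theory Num.Theory.
Import numFieldNormedType.Exports.
Local Open Scope classical_set_scope.
Local Open Scope ring_scope.

(* Mutual independence of a finite family (Y i)_{i < n} of real random
   variables: the product rule holds for every choice of Borel sets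
   (taking B i = setT recovers every finite subfamily). *)
Definition mutually_independent d (T : measurableType d) (R : realType)
  (P : probability T R) (n : nat) (Y : 'I_n -> {RV P >-> R}) : Prop :=
  forall B : 'I_n -> set R, (forall i, measurable (B i)) ->
    fine (P (\bigcap_(i in [set: 'I_n]) (Y i @^-1` B i))) =
    \prod_(i < n) fine (P (Y i @^-1` B i)).

Definition identically_distributed d (T : measurableType d) (R : realType)
  (P : probability T R) (n : nat) (Y : 'I_n -> {RV P >-> R}) : Prop :=
  forall i j : 'I_n, forall A : set R, measurable A ->
    distribution P (Y i) A = distribution P (Y j) A.

Definition infinitely_divisible d (T : measurableType d) (R : realType)
  (P : probability T R) (X : {RV P >-> R}) : Prop :=
  forall n : nat, (0 < n)%N ->
    exists (d' : measure_display) (T' : measurableType d')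
           (P' : probability T' R) (Y : 'I_n -> {RV P' >-> R}),
      mutually_independent Y /\ identically_distributed Y /\
      forall A : set R, measurable A ->
        P' [set w | A (\sum_(i < n) Y i w)] = distribution P X A.

From HB Require Import structures.
From mathcomp Require Import all_boot all_order all_algebra.
From mathcomp Require Import all_classical all_reals all_analysis.
From mathcomp Require Import ring lra.
Import Order.TTheory GRing.Theory Num.Theory.
Import numFieldNormedType.Exports.
Local Open Scope classical_set_scope.
Local Open Scope ring_scope.

(* A Poisson variable X of parameter 1/2 does the job. It is infinitely
   divisible: for every n it has the law of the sum of the n coordinates of
   the product of n Poisson(1/(2n)) weights on sequences of naturals, because
   Poisson laws convolve by adding their parameters. Its mean and variance are
   both 1/2, and since X is integer valued, |X - 1/2| >= 1/2 > eps sqrt(1/2)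
   whenever eps < sqrt 2 / 2. Hence the probability in the statement is 0 for
   this X, and a set of probabilities that contains 0 has infimum 0. *)

Section esum_lemmas.
Context {R : realType}.
Local Open Scope ereal_scope.

Lemma esumZl (T : choiceType) (S : set T) (a : T -> \bar R) (c : R) :
  (0 <= c)%R -> (forall x, 0 <= a x) ->
  \esum_(i in S) (c%:E * a i) = c%:E * \esum_(i in S) a i.
Proof.
move=> c0 a0; rewrite /esum -ereal_supZl //; last first.
  by apply/set0P; exists 0; exists set0; [exact: fsets_set0 | rewrite fsbig_set0].
congr ereal_sup; apply/seteqP; split => x /=.
  by move=> [A FA <-]; exists (\sum_(x \in A) a x); [exists A | rewrite ge0_mule_fsumr].
by move=> [y [A FA <-] <-]; exists A => //; rewrite ge0_mule_fsumr.
Qed.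

Lemma esum_natS (a : nat -> \bar R) : (forall k, 0 <= a k) -> a 0%N = 0 ->
  \esum_(k in [set: nat]) a k = \esum_(k in [set: nat]) a k.+1.
Proof.
move=> a0 a00; rewrite (esumID [set 0%N]) // setTI esum_set1 // a00 add0e.
rewrite (_ : _ `&` _ = succn @` [set: nat]); last first.
  apply/seteqP; split => [[|k]|] /=; first by move=> [_ /(_ erefl)].
    by move=> _; exists k.
  by move=> _ [k _ <-].
by rewrite esum_image // => x y _ _ [].
Qed.

Lemma fine_prod n (E : 'I_n -> \bar R) : (forall i, E i \is a fin_num) ->
  fine (\prod_(i < n) E i) = (\prod_(i < n) fine (E i))%R.
Proof.
move=> E_fin; rewrite (eq_bigr (fun i => (fine (E i))%:E)) => [|i _].
  by rewrite prodEFin.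
by rewrite fineK.
Qed.

End esum_lemmas.

Section poisson_moments.
Context {R : realType} (r : R) (r_gt0 : 0 < r).
Local Notation p := (poisson_pmf r).
Local Open Scope ereal_scope.

Let r_ge0 : (0 <= r)%R. Proof. exact: ltW. Qed.
Let p_ge0 k : (0 <= p k)%R. Proof. exact: poisson_pmf_ge0. Qed.
Local Hint Resolve r_ge0 p_ge0 : core.

Lemma poisson_pmfS k : (k.+1%:R * p k.+1 = r * p k)%R.
Proof.
rewrite /poisson_pmf r_gt0 factS natrM exprS.
by field; rewrite nat1r !pnatr_eq0 -lt0n fact_gt0.
Qed.

Lemma poisson_pmf_esum1 : \esum_(k in [set: nat]) (p k)%:E = 1.
Proof.
have <- : poisson_prob r 0%N [set: nat] = 1 by exact: probability_setT.
by rewrite /poisson_prob r_gt0.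
Qed.

Lemma poisson_esum_mulnat (g : nat -> R) : (forall k, 0 <= g k)%R ->
  \esum_(k in [set: nat]) (k%:R * g k * p k)%:E =
  r%:E * \esum_(k in [set: nat]) (g k.+1 * p k)%:E.
Proof.
move=> g_ge0; have gp_ge0 k : (0 <= g k * p k)%R := mulr_ge0 (g_ge0 k) (p_ge0 k).
rewrite esum_natS ?mul0r // => [|k]; last first.
  by rewrite lee_fin -mulrA (mulr_ge0 _ (gp_ge0 k)).
rewrite -esumZl // => [|k]; last by rewrite lee_fin; exact: mulr_ge0 (g_ge0 _) _.
apply: eq_esum => k _.
by rewrite -EFinM mulrAC poisson_pmfS -mulrA [(p k * _)%R]mulrC.
Qed.

Lemma poisson_mean_esum : \esum_(k in [set: nat]) (k%:R * p k)%:E = r%:E.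
Proof.
under eq_esum => k _ do rewrite -[k%:R]mulr1.
rewrite (@poisson_esum_mulnat (fun=> 1%R)) //.
under eq_esum => k _ do rewrite mul1r.
by rewrite poisson_pmf_esum1 mule1.
Qed.

Lemma poisson_second_moment_esum :
  \esum_(k in [set: nat]) (k%:R ^+ 2 * p k)%:E = (r * (r + 1))%:E.
Proof.
under eq_esum do rewrite expr2.
rewrite poisson_esum_mulnat // EFinM; congr (_ * _).
under eq_esum do rewrite -natr1 mulrDl mul1r EFinD.
rewrite esumD => [|k _|k _]; rewrite ?lee_fin ?mulr_ge0 //.
by rewrite poisson_mean_esum poisson_pmf_esum1.
Qed.

Lemma poisson_variance_esum :
  \esum_(k in [set: nat]) ((k%:R - r) ^+ 2 * p k)%:E = r%:E.
Proof.
(* Subtraction does not distribute over extended-real sums, so add [2 r E[X]]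
   to V instead: termwise, [(k - r)^2 + 2 r k = k^2 + r^2]. *)
set V := \esum_(k in _) _.
have V_shift : V + (2 * r)%:E * (\esum_(k in [set: nat]) (k%:R * p k)%:E) =
    (\esum_(k in [set: nat]) (k%:R ^+ 2 * p k)%:E) +
    (r * r)%:E * (\esum_(k in [set: nat]) (p k)%:E).
  rewrite -!esumZl => [||k||k]; rewrite ?lee_fin ?mulr_ge0 //.
  rewrite /V -!esumD => [|k _|k _|k _|k _]; last 4 first.
  - by rewrite lee_fin mulr_ge0 ?sqr_ge0.
  - by rewrite -EFinM lee_fin mulr_ge0 ?mulr_ge0.
  - by rewrite lee_fin mulr_ge0 ?sqr_ge0.
  - by rewrite -EFinM lee_fin mulr_ge0 ?mulr_ge0.
  by apply: eq_esum => k _; rewrite -!EFinM -!EFinD; congr EFin; ring.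
move: V_shift; rewrite poisson_mean_esum poisson_second_moment_esum.
rewrite poisson_pmf_esum1 mule1 -!EFinM -!EFinD.
move/(congr1 (fun x => x - (2 * r * r)%:E)); rewrite /= addeK // => ->.
by rewrite -EFinB; congr EFin; ring.
Qed.

End poisson_moments.

(* Sequences of naturals, with the discrete sigma-algebra, serve as the sample
   space of n i.i.d. nat-valued variables; [iid_measure f n] below only charges
   the sequences of length n. *)
HB.instance Definition _ := isPointed.Build (seq nat) [::].
HB.instance Definition _ := @isMeasurable.Build default_measure_display
  (seq nat) discrete_measurable discrete_measurable0
  discrete_measurableC discrete_measurableU.

Definition seq_weight {R : realType} (f : nat -> R) (s : seq nat) : R :=
  \prod_(x <- s) f x.

Definition cons_pair (kt : nat * seq nat) : seq nat := kt.1 :: kt.2.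

Section seq_weight.
Context {R : realType} (f : nat -> R) (f_ge0 : forall k, 0 <= f k).
Local Open Scope ereal_scope.

Lemma seq_weight_ge0 s : (0 <= seq_weight f s)%R.
Proof. by apply: prodr_ge0 => x _. Qed.

Lemma esum_seq_weight_cons (K : set nat) (T : nat -> set (seq nat)) :
  \esum_(s in cons_pair @` (K `*`` T)) (seq_weight f s)%:E =
  \esum_(k in K) (f k)%:E * \esum_(t in T k) (seq_weight f t)%:E.
Proof.
rewrite esum_image => [|[a b] [c d] _ _ [-> ->] //].
transitivity (\esum_(k in K) \esum_(t in T k) ((f k)%:E * (seq_weight f t)%:E)).
  rewrite esum_esum => [|k t _ _]; last first.
    by rewrite -EFinM lee_fin mulr_ge0 ?seq_weight_ge0.
  by apply: eq_esum => -[k t] _; rewrite /seq_weight big_cons EFinM.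
by apply: eq_esum => k _; rewrite esumZl // => t; rewrite lee_fin seq_weight_ge0.
Qed.

End seq_weight.

Record nat_pmf (R : realType) := NatPmf {
  nat_pmf_fun :> nat -> R;
  nat_pmf_ge0 : forall k, (0 <= nat_pmf_fun k)%R;
  nat_pmf_esum1 : (\esum_(k in [set: nat]) (nat_pmf_fun k)%:E = 1)%E }.
Arguments NatPmf {R}.
Arguments nat_pmf_ge0 {R}.
Arguments nat_pmf_esum1 {R}.

Definition seq_box (n : nat) (B : nat -> set nat) : set (seq nat) :=
  [set s | size s = n /\ forall i, (i < n)%N -> B i (nth 0%N s i)].

Section iid_seq.
Context {R : realType} (f : nat_pmf R).
Local Open Scope ereal_scope.

Let f_ge0 k : (0 <= f k)%R. Proof. exact: nat_pmf_ge0. Qed.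
Local Hint Resolve f_ge0 : core.

Lemma esum_nat_pmf_fin_num (B : set nat) : \esum_(k in B) (f k)%:E \is a fin_num.
Proof.
rewrite ge0_fin_numE; last by apply: esum_ge0 => k _; rewrite lee_fin.
rewrite (@le_lt_trans _ _ 1) ?ltey // -(nat_pmf_esum1 f) esum_mkcond.
by apply: le_esum => k _; case: ifP => // _; rewrite lee_fin.
Qed.

Lemma esum_seq_weight_box n B :
  \esum_(s in seq_box n B) (seq_weight f s)%:E =
  \prod_(i < n) \esum_(k in B i) (f k)%:E.
Proof.
elim: n B => [|n IH] B.
  rewrite big_ord0 (_ : seq_box 0 B = [set [::]]); last first.
    by apply/seteqP; split => [s [/size0nil -> _]|s ->].
  by rewrite esum_set1 ?lee_fin ?seq_weight_ge0 // /seq_weight big_nil.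
rewrite (_ : seq_box n.+1 B =
    cons_pair @` (B 0%N `*`` fun=> seq_box n (B \o succn))); last first.
  apply/seteqP; split => [[|x t] [//= [sz] Bs]|_ [[k t] [/= Bk [sz Bt]] <-]].
    by exists (x, t) => //; split; [exact: (Bs 0%N) | split => // i /(Bs i.+1)].
  by split => [/=|[|i] //=]; [rewrite sz | move/Bt].
rewrite esum_seq_weight_cons // IH big_ord_recl.
have fin_prod : (\prod_(i < n) \esum_(k in B i.+1) (f k)%:E) \is a fin_num.
  by apply: prode_fin_num => i _; exact: esum_nat_pmf_fin_num.
rewrite -(fineK fin_prod); under eq_esum do rewrite muleC.
rewrite esumZl => [||k]; first exact: muleC.
- by apply/fine_ge0/prode_ge0 => i _; apply: esum_ge0 => k _; rewrite lee_fin.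
- by rewrite lee_fin.
Qed.

Lemma esum_seq_weight_nth n i (C : set nat) : (i < n)%N ->
  \esum_(s in [set s | size s = n /\ C (nth 0%N s i)]) (seq_weight f s)%:E =
  \esum_(k in C) (f k)%:E.
Proof.
move=> lt_in.
rewrite (_ : [set s | _] = seq_box n (fun j => if j == i then C else setT)).
  rewrite esum_seq_weight_box (bigD1 (Ordinal lt_in)) //= eqxx big1 ?mule1 //.
  by move=> j /negPf ji; rewrite (_ : (j == i :> nat) = false) ?nat_pmf_esum1.
apply/seteqP; split => s [sz Cs]; split => //.
  by move=> j lt_jn; case: eqP => // ->.
by have := Cs i lt_in; rewrite eqxx.
Qed.

End iid_seq.

Definition iid_measure {R : realType} (f : nat_pmf R) (n : nat)
    (A : set (seq nat)) : \bar R :=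
  \esum_(s in A `&` [set s | size s = n]) (seq_weight f s)%:E.

Section iid_measure.
Context {R : realType} (f : nat_pmf R) (n : nat).
Local Open Scope ereal_scope.
Local Notation mu := (iid_measure f n).

Let weight_ge0 s : 0 <= (seq_weight f s)%:E.
Proof. by rewrite lee_fin seq_weight_ge0 // => k; exact: nat_pmf_ge0. Qed.

Let mu0 : mu set0 = 0.
Proof. by rewrite /mu /iid_measure set0I esum_set0. Qed.

Let mu_ge0 A : 0 <= mu A.
Proof. exact: esum_ge0. Qed.

Let mu_sigma_additive : semi_sigma_additive mu.
Proof.
move=> F mF tF mUF; apply: cvg_toP.
  apply: ereal_nondecreasing_is_cvgn => a b ab.
  by apply: lee_sum_nneg_natr => // k _ _; exact: esum_ge0.
by rewrite /mu /iid_measure setI_bigcupl nneseries_sum_bigcup //; exact: trivIset_setIr.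
Qed.

HB.instance Definition _ := isMeasure.Build _ _ _ mu mu0 mu_ge0 mu_sigma_additive.

Let mu_setT : mu [set: seq nat] = 1.
Proof.
rewrite /mu /iid_measure setTI (_ : [set s | _] = seq_box n (fun=> setT)).
  by rewrite esum_seq_weight_box big1 // => i _; exact: nat_pmf_esum1.
by apply/seteqP; split => s [].
Qed.

HB.instance Definition _ := @Measure_isProbability.Build _ _ R mu mu_setT.

End iid_measure.

Definition nth_real {R : realType} (i : nat) (s : seq nat) : R := (nth 0%N s i)%:R.

HB.instance Definition _ (R : realType) (i : nat) :=
  isMeasurableFun.Build _ _ (seq nat) R (nth_real i) (fun _ B _ => I).

Section iid_coordinates.
Context {R : realType} (f : nat_pmf R) (n : nat).
Local Notation P := (iid_measure f n : probability _ R).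
Local Notation Y := (fun i : 'I_n => (nth_real i : {RV P >-> R})).

Lemma iid_measure_nth_real (i : 'I_n) (A : set R) :
  P (nth_real i @^-1` A) = \esum_(k in [set k | A k%:R]) (f k)%:E.
Proof. by rewrite /= /iid_measure setIC; exact: esum_seq_weight_nth. Qed.

Lemma nth_real_identically_distributed : identically_distributed Y.
Proof. by move=> i j A _; rewrite /distribution /pushforward !iid_measure_nth_real. Qed.

Lemma nth_real_mutually_independent : mutually_independent Y.
Proof.
move=> B _; under eq_bigr => i _ do rewrite /= iid_measure_nth_real.
rewrite -fine_prod => [|i]; last exact: esum_nat_pmf_fin_num.
pose C j := [set k : nat | forall i : 'I_n, val i = j -> B i k%:R].
rewrite /= /iid_measure (_ : _ `&` _ = seq_box n C); last first.
  apply/seteqP; split => s.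
    by move=> [Bs sz]; split => // j _ i ij; have := Bs i I; rewrite /= /nth_real ij.
  by move=> [sz Cs]; split => // i _; exact: (Cs i (ltn_ord i) i erefl).
rewrite esum_seq_weight_box; congr (fine _); apply: eq_bigr => i _.
congr esum; apply/seteqP; split => k /=; first exact.
by move=> Bk j /val_inj ->.
Qed.

End iid_coordinates.

Lemma sum_div_fact_conv {R : numFieldType} (a b : R) m :
  \sum_(k < m.+1) a ^+ k / k`!%:R * (b ^+ (m - k) / (m - k)`!%:R) =
  (a + b) ^+ m / m`!%:R.
Proof.
rewrite addrC exprDn mulr_suml; apply: eq_bigr => -[k /=]; rewrite ltnS => le_km _.
have /(congr1 (fun x => x%:R : R)) := bin_fact le_km; rewrite !natrM => binE.
have fact_neq0 j : (j`!%:R : R) != 0 by rewrite pnatr_eq0 -lt0n fact_gt0.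
have bin_neq0 : ('C(m, k)%:R : R) != 0 by rewrite pnatr_eq0 -lt0n bin_gt0.
rewrite -binE -[_ *+ 'C(m, k)]mulr_natr.
by field; rewrite bin_neq0 !fact_neq0.
Qed.

Lemma poisson_pmf_conv {R : realType} (a b : R) m : 0 < a -> 0 < b ->
  \sum_(k < m.+1) poisson_pmf a k * poisson_pmf b (m - k) =
  poisson_pmf (a + b) m.
Proof.
move=> a_gt0 b_gt0; rewrite /poisson_pmf a_gt0 b_gt0 addr_gt0 //.
under eq_bigr => k _.
  rewrite (_ : _ * _ = expR (- a) * expR (- b) *
    (a ^+ k / k`!%:R * (b ^+ (m - k) / (m - k)`!%:R))); first over.
  by ring.
by rewrite -mulr_sumr sum_div_fact_conv -expRD opprD mulrC.
Qed.

Section poisson_seq_sum.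
Context {R : realType} (r : R) (r_gt0 : 0 < r).
Local Notation w := (seq_weight (poisson_pmf r)).
Local Open Scope ereal_scope.

Let w_ge0 s : 0 <= (w s)%:E.
Proof. by rewrite lee_fin seq_weight_ge0 // => k; exact: poisson_pmf_ge0. Qed.

Lemma esum_poisson_seq_weight_sumn n m :
  \esum_(s in [set s | size s = n.+1 /\ sumn s = m]) (w s)%:E =
  (poisson_pmf (n.+1%:R * r) m)%:E.
Proof.
elim: n m => [|n IH] m.
  rewrite (_ : [set s | _] = [set [:: m]]); last first.
    apply/seteqP; split => [[|x [|y t]] [] //= _|s ->] /=; rewrite addn0 // => -> //.
  by rewrite esum_set1 // /seq_weight big_seq1 mul1r.
rewrite (_ : [set s | _] =
    cons_pair @` (`I_m.+1 `*`` fun k => [set s | size s = n.+1 /\ sumn s = (m - k)%N]));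
    last first.
  apply/seteqP; split => [[|x t] [//= [sz] <-]|_ [[k t] [/= lt_km [sz tE]] <-]].
    by exists (x, t) => //; split; rewrite /= ?ltnS ?leq_addr ?addKn.
  by split; rewrite /= ?sz // tE subnKC // -ltnS.
rewrite esum_seq_weight_cons => [|k]; last exact: poisson_pmf_ge0.
under eq_esum do rewrite IH -EFinM.
rewrite esum_fset ?finite_II // => [|k _]; last first.
  by rewrite lee_fin mulr_ge0 ?poisson_pmf_ge0.
rewrite -fsbig_ord sumEFin poisson_pmf_conv ?mulr_gt0 //.
by rewrite -[n.+2]addn1 natrD mulrDl mul1r addrC.
Qed.

Lemma esum_poisson_seq_weight_sumn_in n (A : set nat) :
  \esum_(s in [set s | size s = n.+1 /\ A (sumn s)]) (w s)%:E =
  \esum_(m in A) (poisson_pmf (n.+1%:R * r) m)%:E.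
Proof.
rewrite (_ : [set s | _] =
    \bigcup_(m in A) [set s | size s = n.+1 /\ sumn s = m]); last first.
  apply/seteqP; split => [s [sz As]|s [m Am [sz sE]]]; first by exists (sumn s).
  by rewrite /= sE.
rewrite esum_bigcupT //.
  by apply: eq_esum => m _; exact: esum_poisson_seq_weight_sumn.
by move=> i j _ _ [s [[_ <-] [_ <-]]].
Qed.

End poisson_seq_sum.

Definition nat_real {R : realType} (k : nat) : R := k%:R.

HB.instance Definition _ (R : realType) :=
  isMeasurableFun.Build _ _ nat R nat_real (fun _ B _ => I).

Definition poisson_nat_pmf {R : realType} {r : R} (r_gt0 : 0 < r) : nat_pmf R :=
  NatPmf (poisson_pmf r) (poisson_pmf_ge0 r) (poisson_pmf_esum1 r r_gt0).

Section poisson_random_variable.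
Context {R : realType} (r : R) (r_gt0 : 0 < r).
(* The second argument of [poisson_prob] is ignored by its definition. *)
Local Notation P := (poisson_prob r 0%N).
Local Notation X := (nat_real : {RV P >-> R}).
Local Open Scope ereal_scope.

Lemma integral_poisson_prob (g : nat -> \bar R) : (forall k, 0 <= g k) ->
  \int[P]_k g k = \esum_(k in [set: nat]) ((poisson_pmf r k)%:E * g k).
Proof.
move=> g_ge0.
(* [P] is the series of the point masses [poisson_pmf r k * \d_k]. *)
pose m_ k := mscale (NngNum (poisson_pmf_ge0 r k)) (@dirac _ nat k R).
transitivity (\int[mseries m_ 0]_k g k).
  congr (integral _ _ _); apply/funext => A.
  rewrite /poisson_prob r_gt0 /mseries esum_mkcond -nneseries_esumT => [|k]; last first.
    by case: ifP => // _; rewrite lee_fin poisson_pmf_ge0.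
  apply: eq_eseriesr => k _; rewrite /m_ /= /mscale /= diracE.
  by case: (k \in A); rewrite ?mule1 ?mule0.
rewrite ge0_integral_measure_series // nneseries_esumT => [|k]; last first.
  exact: integral_ge0.
apply: eq_esum => k _.
by rewrite ge0_integral_mscale // integral_dirac // diracT mul1e.
Qed.

Lemma expectation_poisson : 'E_P[X] = r%:E.
Proof.
rewrite unlock integral_poisson_prob => [|k]; last by rewrite lee_fin.
by under eq_esum do rewrite -EFinM mulrC; exact: poisson_mean_esum.
Qed.

Lemma expectation_poisson_sqr : 'E_P[fun k => (X k ^+ 2)%R] = (r * (r + 1))%:E.
Proof.
rewrite unlock integral_poisson_prob => [|k]; last by rewrite lee_fin sqr_ge0.
by under eq_esum do rewrite -EFinM mulrC; exact: poisson_second_moment_esum.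
Qed.

Lemma variance_poisson : 'V_P[X] = r%:E.
Proof.
rewrite /variance unlock expectation_poisson /= unlock.
rewrite integral_poisson_prob => [|k]; last by rewrite lee_fin -expr2 sqr_ge0.
by under eq_esum do rewrite -EFinM mulrC -expr2; exact: poisson_variance_esum.
Qed.

End poisson_random_variable.

Lemma sum_nth_real {R : realType} n (s : seq nat) : size s = n ->
  \sum_(i < n) nth_real i s = (sumn s)%:R :> R.
Proof. by move=> <-; rewrite sumnE (big_nth 0%N) big_mkord natr_sum. Qed.

Lemma poisson_infinitely_divisible {R : realType} (r : R) : 0 < r ->
  infinitely_divisible (nat_real : {RV poisson_prob r 0%N >-> R}).
Proof.
move=> r_gt0 [//|n] _.
have rn_gt0 : 0 < r / n.+1%:R by rewrite divr_gt0.
pose f := poisson_nat_pmf rn_gt0.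
exists default_measure_display, (seq nat), (iid_measure f n.+1 : probability _ R).
exists (fun i : 'I_n.+1 => nth_real i : {RV _ >-> R}).
split; first exact: nth_real_mutually_independent.
split; first exact: nth_real_identically_distributed.
move=> A _; rewrite /distribution /pushforward /= /iid_measure.
rewrite (_ : _ `&` _ = [set s | size s = n.+1 /\ [set k | A k%:R] (sumn s)]).
  rewrite esum_poisson_seq_weight_sumn_in // mulrC divfK ?pnatr_eq0 //.
  by rewrite /poisson_prob r_gt0.
apply/seteqP; split => [s [As sz]|s [sz As]]; split => //=.
- by rewrite -(sum_nth_real _ _ sz).
- by rewrite (sum_nth_real _ _ sz).
Qed.

Lemma inf_eq0_nonneg {R : realType} (S : set R) :
  S 0 -> (forall x, S x -> 0 <= x) -> inf S = 0.
Proof.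
move=> S0 S_ge0; apply/eqP; rewrite eq_le; apply/andP; split.
  by apply: ge_inf S0; exists 0.
by apply: lb_le_inf; [exists 0 | exact: S_ge0].
Qed.

Lemma half_le_dist_natr {R : realFieldType} (k : nat) : 2^-1 <= `|k%:R - 2^-1 : R|.
Proof.
case: k => [|k]; first by rewrite sub0r normrN ger0_norm.
have k1_ge1 : 1 <= k.+1%:R :> R by rewrite ler1n.
by rewrite ger0_norm; lra.
Qed.

Lemma mul_sqrt_half_lt_half {R : rcfType} (eps : R) :
  eps < Num.sqrt 2 / 2 -> eps * Num.sqrt 2^-1 < 2^-1.
Proof.
move=> eps_lt; have sqrt_half_gt0 : 0 < Num.sqrt (2^-1 : R) by rewrite sqrtr_gt0.
rewrite [X in _ < X](_ : _ = Num.sqrt 2 / 2 * Num.sqrt 2^-1) ?ltr_pM2r //.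
by rewrite mulrAC -sqrtrM ?ler0n // mulfV ?pnatr_eq0 // sqrtr1 mul1r.
Qed.

Theorem proposition2p2 (R : realType) (eps : R) :
  0 < eps -> eps < Num.sqrt 2 / 2 ->
  inf [set r : R | exists (d : measure_display) (T : measurableType d)
                          (P : probability T R) (X : {RV P >-> R}),
         ('E_P[fun w => (X w ^+ 2)%R] < +oo)%E /\
         infinitely_divisible X /\
         r = fine (P [set w | (`|(X w - fine ('E_P[X]))%R|%R
                              <= eps * Num.sqrt (fine 'V_P[X]))%R])] = 0.
Proof.
move=> _ eps_lt; have half_gt0 : 0 < 2^-1 :> R by rewrite invr_gt0.
apply: inf_eq0_nonneg => [|_ [d [T [P [X [_ [_ ->]]]]]]]; last first.
  exact/fine_ge0/measure_ge0.
exists default_measure_display, nat, (poisson_prob 2^-1 0%N), nat_real.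
split; first by rewrite expectation_poisson_sqr ?ltry.
split; first exact: poisson_infinitely_divisible.
rewrite expectation_poisson // variance_poisson // /=.
rewrite (_ : [set k | _] = set0) ?measure0 //; apply/seteqP; split => // k /=.
apply/negP; rewrite -ltNge.
exact: lt_le_trans (mul_sqrt_half_lt_half _ eps_lt) (half_le_dist_natr k).
Qed.
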